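(* Let $m$ be an even positive integer. Then 1) $\Gamma_0(2)^+\begin{bmatrix}1&0\\0&m\end{bmatrix}\Gamma_0(2)=\bigcup_{\gamma\in M_1^m}\Gamma_0(2)^+\gamma$; 2) $\Gamma_0(2)^+\begin{bmatrix}m&0\\0&1\end{bmatrix}\Gamma_0(2)=\bigcup_{\gamma\in M_2^m}\Gamma_0(2)^+\gamma$; 3) $\Gamma_0(2)^+\begin{bmatrix}m&0\\0&1\end{bmatrix}\Gamma_0(2)^+=\Gamma_0(2)^+\begin{bmatrix}1&0\\0&m\end{bmatrix}\Gamma_0(2)^+=\bigcup_{\gamma\in M^m}\Gamma_0(2)^+\gamma$.
   Context: Matrices are elements of $GL_2^+(\mathbb{R})$ considered up to sign. $\Gamma_0(2)=\{\begin{bmatrix}a&b\\c&d\end{bmatrix}\in SL_2(\mathbb{Z}): c\equiv0 \pmod 2\}$, $w_2=2^{-1/2}\begin{bmatrix}0&-1\\2&0\end{bmatrix}$, and $\Gamma_0(2)^+=\Gamma_0(2)\cup\Gamma_0(2)w_2$ is the group generated by $\Gamma_0(2)$ and $w_2$. For a positive integer $m$: $M_1^m=\{\begin{bmatrix}x&y\\0&z\end{bmatrix}: x,y,z\in\mathbb{Z},\ xz=m,\ 0\leq y<z,\ \gcd(x,y,z)=1,\ x\text{ odd}\}$; $S_1^m=\{\begin{bmatrix}x&y\\0&z\end{bmatrix}: xz=m,\ 0\leq y<z,\ \gcd(x,y,z)=1,\ z\text{ odd}\}$; $S_2^m=\{2^{-1/2}\begin{bmatrix}x&y\\0&z\end{bmatrix}: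 xz=2m,\ 0\leq y<z,\ \gcd(x,y,z)=1,\ x,z\text{ even}\}$; $M_2^m=S_1^m\cup S_2^m$, $M^m=M_1^m\cup M_2^m$ (integers $x,y,z$, $x,z>0$). *)

From HB Require Import structures.
From mathcomp Require Import all_boot all_order all_algebra.
From mathcomp Require Import reals.
Set Implicit Arguments. Unset Strict Implicit. Unset Printing Implicit Defensive.
Import Order.TTheory GRing.Theory Num.Theory.
Local Open Scope ring_scope.

Section Defs.
Variable R : realType.

Definition intmx (a b c d : int) : 'M[R]_2 :=
  \matrix_(i < 2, j < 2)
    (if (i == 0 :> nat) then (if (j == 0 :> nat) then a else b)
     else (if (j == 0 :> nat) then c else d))%:~R.

Definition Gamma0_2 (g : 'M[R]_2) : Prop :=
  exists a b c d : int,
    g = intmx a b c d /\ a * d - b * c = 1 /\ (2 %| c)%Z.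

Definition w2 : 'M[R]_2 := (Num.sqrt (2 : R))^-1 *: intmx 0 (-1) 2 0.

Definition Gamma0_2plus (g : 'M[R]_2) : Prop :=
  Gamma0_2 g \/ exists h, Gamma0_2 h /\ g = h *m w2.

Definition M1 (m : nat) (g : 'M[R]_2) : Prop :=
  exists x y z : int,
    g = intmx x y 0 z /\ 0 < x /\ 0 < z /\ x * z = m%:Z /\ 0 <= y /\ y < z /\
    gcdz (gcdz x y) z = 1 /\ odd `|x|%N.

Definition S1 (m : nat) (g : 'M[R]_2) : Prop :=
  exists x y z : int,
    g = intmx x y 0 z /\ 0 < x /\ 0 < z /\ x * z = m%:Z /\ 0 <= y /\ y < z /\
    gcdz (gcdz x y) z = 1 /\ odd `|z|%N.

Definition S2 (m : nat) (g : 'M[R]_2) : Prop :=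
  exists x y z : int,
    g = (Num.sqrt (2 : R))^-1 *: intmx x y 0 z /\ 0 < x /\ 0 < z /\
    x * z = (2 * m)%:Z /\ 0 <= y /\ y < z /\
    gcdz (gcdz x y) z = 1 /\ ~~ odd `|x|%N /\ ~~ odd `|z|%N.

Definition M2 (m : nat) (g : 'M[R]_2) : Prop := S1 m g \/ S2 m g.
Definition Mm (m : nat) (g : 'M[R]_2) : Prop := M1 m g \/ M2 m g.

Definition dcoset (G : 'M[R]_2 -> Prop) (alpha : 'M[R]_2) (H : 'M[R]_2 -> Prop)
  (g : 'M[R]_2) : Prop :=
  exists a b, G a /\ H b /\ g = a *m alpha *m b.

Definition cosets_union (G : 'M[R]_2 -> Prop) (S : 'M[R]_2 -> Prop)
  (g : 'M[R]_2) : Prop :=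
  exists a gamma, G a /\ S gamma /\ g = a *m gamma.

End Defs.

(* Write alpha = diag(1, m) and beta = diag(m, 1).  Since Gamma_0(2)^+ is a
   group, Gamma_0(2)^+ alpha H is the union of the cosets Gamma_0(2)^+ s over
   s in S as soon as alpha H lies in Gamma_0(2)^+ S and S lies in
   Gamma_0(2)^+ alpha H.  The first inclusion is a Hermite reduction: for b in
   Gamma_0(2) the first column of alpha b (or beta b) is g (a, c) with a, c
   coprime; when c is even, completing (a, c) to a matrix of Gamma_0(2) leaves
   an upper triangular cofactor in M_1 (or S_1), and when c is odd the same
   reduction, applied to [[0, -1], [2, 0]]^-1 (2 beta b), leaves a cofactor in
   S_2 behind w_2.  The second inclusion is explicit: the first row of a
   primitive [[x, y], [0, z]] is made coprime by a translate y + k z, and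
   Bezout coefficients give the two Gamma_0(2) factors.  Part 3 follows from
   alpha w_2 = w_2 beta, which conjugates the two double cosets into each other
   and turns alpha Gamma_0(2) w_2 into w_2 beta Gamma_0(2). *)

From HB Require Import structures.
From mathcomp Require Import all_boot all_order all_algebra.
From mathcomp Require Import reals ring.
Set Implicit Arguments. Unset Strict Implicit. Unset Printing Implicit Defensive.
Import Order.TTheory GRing.Theory Num.Theory.
Local Open Scope ring_scope.

Lemma eq_mod1 (R : comPzRingType) (e F X Y : R) :
  e = 1 -> X - Y = (e - 1) * F -> X = Y.
Proof. by move=> -> /eqP; rewrite subrr mul0r subr_eq0 => /eqP. Qed.

Lemma odd_absz (x : int) : odd `|x|%N = ~~ (2 %| x)%Z.
Proof. by rewrite dvdzE dvdn2 negbK. Qed.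

Lemma dvd2zM (a b : int) : (2 %| a * b)%Z = (2 %| a)%Z || (2 %| b)%Z.
Proof. by rewrite !dvdzE abszM Euclid_dvdM. Qed.

Lemma coprime2z (x : int) : coprimez 2 x = ~~ (2 %| x)%Z.
Proof. by rewrite coprimezE prime_coprime. Qed.

Lemma odd_diag_det1 (a b c d : int) : a * d - b * c = 1 -> (2 %| c)%Z ->
  ~~ (2 %| a)%Z /\ ~~ (2 %| d)%Z.
Proof.
move=> det1 c_even; have : ~~ (2 %| a * d)%Z.
  by rewrite -(rpredBr (a * d) (dvdz_mull b c_even)) det1.
by rewrite dvd2zM negb_or => /andP.
Qed.

Lemma gcdz3_eq1 (x y z : int) :
  (forall d, (d %| x)%Z -> (d %| y)%Z -> (d %| z)%Z -> (d %| 1%R)%Z) ->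
  gcdz (gcdz x y) z = 1.
Proof.
move=> dvd1; have := dvdzz (gcdz (gcdz x y) z); rewrite !dvdz_gcd => /andP[/andP[gx gy] gz].
by have := dvd1 _ gx gy gz; rewrite dvdz1 /gcdz /= => /eqP ->.
Qed.

Lemma prime_dvdz_of_not_coprimez (X W : int) : X != 0 -> ~~ coprimez X W ->
  exists2 p : nat, prime p & (p%:Z %| X)%Z && (p%:Z %| W)%Z.
Proof.
move=> X_neq0 not_coXW; set n := gcdn `|X| `|W|.
have n_gt1 : (1 < n)%N.
  have : (0 < n)%N by rewrite gcdn_gt0 absz_gt0 X_neq0.
  by move: not_coXW; rewrite /coprimez /gcdz -/n; case: n => [|[|]].
exists (pdiv n); first exact: pdiv_prime.
by rewrite !dvdzE /= !(dvdn_trans (pdiv_dvd n)) ?dvdn_gcdl ?dvdn_gcdr.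
Qed.

(* The translate [k] is the part of [X] made of the primes not dividing [Y]. *)
Lemma exists_coprimez_addMr (X Y Z : int) : X != 0 -> coprimez (gcdz X Y) Z ->
  exists k, coprimez X (Y + k * Z).
Proof.
move=> X_neq0 /eqP XYZ1.
pose pi : nat_pred := [pred p | ~~ (p %| `|Y|)%N].
have X_gt0 : (0 < `|X|)%N by rewrite absz_gt0.
have dvd_part p : prime p -> (p %| `|X|`_pi)%N = (p %| `|X|)%N && (p \in pi).
  move=> p_pr; have := pi_of_part pi X_gt0 p.
  by rewrite !inE !mem_primes p_pr X_gt0 part_gt0.
have no_common p : prime p -> (p%:Z %| X)%Z -> (p%:Z %| Y)%Z -> (p%:Z %| Z)%Z -> False.
  move=> p_pr pX pY pZ.
  have : (p%:Z %| gcdz (gcdz X Y) Z)%Z by rewrite !dvdz_gcd pX pY pZ.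
  by rewrite XYZ1 dvdz1 /=; case: p p_pr pX pY pZ => [|[|]].
exists (`|X|`_pi)%:Z; apply: contraT => /(prime_dvdz_of_not_coprimez X_neq0).
case=> p p_pr /andP[pX pYkZ].
have pY_kZ : (p%:Z %| (`|X|`_pi)%:Z * Z)%Z = (p%:Z %| Y)%Z.
  by rewrite -[_ * Z](addKr Y) rpredDr // rpredN.
case pY: (p%:Z %| Y)%Z.
- have pk : ~~ (p %| `|X|`_pi)%N.
    by rewrite dvd_part // !inE -[(p %| `|Y|)%N]/(p%:Z %| Y)%Z pY andbF.
  have : (p%:Z %| (`|X|`_pi)%:Z * Z)%Z by rewrite pY_kZ pY.
  rewrite dvdzE abszM Euclid_dvdM // (negbTE pk) /=.
  by move/(no_common p p_pr pX pY).
- have pk : (p %| `|X|`_pi)%N.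
    by rewrite dvd_part // !inE -[(p %| `|Y|)%N]/(p%:Z %| Y)%Z pY andbT.
  by rewrite -pY_kZ dvdz_mulr in pY.
Qed.

Lemma gcdz_coprime_cofactors (A C : int) : (A != 0) || (C != 0) ->
  exists a c g, [/\ 0 < g, A = a * g, C = c * g & coprimez a c].
Proof.
move=> AC_neq0; have [u [v uvAC]] := Bezoutz A C.
have g_neq0 : gcdz A C != 0 by rewrite gcdz_eq0 negb_and.
exists (A %/ gcdz A C)%Z, (C %/ gcdz A C)%Z, (gcdz A C).
rewrite lt_def g_neq0 !divzK ?dvdz_gcdl ?dvdz_gcdr //; split=> //.
apply/coprimezP; exists (u, v); apply: (mulIf g_neq0).
by rewrite mul1r mulrDl -!mulrA !divzK ?dvdz_gcdl ?dvdz_gcdr.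
Qed.

Lemma upper_triangular_factor (A B C D a c g : int) :
  A = a * g -> C = c * g -> coprimez a c -> 0 < g -> 0 < A * D - B * C ->
  exists q s y z, [/\ a * s - q * c = 1, B = a * y + q * z, D = c * y + s * z,
    [/\ 0 < z, 0 <= y & y < z] & g * z = A * D - B * C].
Proof.
move=> -> -> /coprimezP[[u v] /= uv1] g_gt0.
set z := a * D - c * B; have -> : a * g * D - B * (c * g) = g * z by rewrite /z; ring.
rewrite pmulr_rgt0 // => z_gt0.
set Y := u * B + v * D; set k := (Y %/ z)%Z; set y := (Y %% z)%Z.
have ey : y = Y - k * z by rewrite [Y in RHS](divz_eq Y z) addrAC subrr add0r.
exists (a * k - v), (c * k + u), y, z; split=> //.
- by rewrite -uv1; ring.
- by rewrite -[LHS]mulr1 -uv1 ey /Y /z; ring.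
- by rewrite -[LHS]mulr1 -uv1 ey /Y /z; ring.
- by split=> //; [apply: modz_ge0; rewrite gt_eqF | apply: ltz_pmod].
Qed.

Section Cosets.
Variables (R : realType) (G H : 'M[R]_2 -> Prop).
Hypothesis G_mul : forall a b, G a -> G b -> G (a *m b).
Hypothesis H_mul : forall a b, H a -> H b -> H (a *m b).

Lemma cosets_unionS (G' S S' : 'M[R]_2 -> Prop) g :
  (forall a, G a -> G' a) -> (forall s, S s -> S' s) ->
  cosets_union G S g -> cosets_union G' S' g.
Proof.
move=> GG' SS' [a [s [Ga [Ss ->]]]].
by exists a, s; split; [apply: GG' | split; [apply: SS'|]].
Qed.

Lemma dcosetS (G' H' : 'M[R]_2 -> Prop) alpha g :
  (forall a, G a -> G' a) -> (forall b, H b -> H' b) ->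
  dcoset G alpha H g -> dcoset G' alpha H' g.
Proof.
move=> GG' HH' [a [b [Ga [Hb ->]]]].
by exists a, b; split; [apply: GG' | split; [apply: HH'|]].
Qed.

Lemma cosets_unionMl (S : 'M[R]_2 -> Prop) a g :
  G a -> cosets_union G S g -> cosets_union G S (a *m g).
Proof.
move=> Ga [c [s [Gc [Ss ->]]]].
by exists (a *m c), s; rewrite mulmxA; split; [apply: G_mul|].
Qed.

Lemma dcoset_factor alpha beta c d g : beta = c *m alpha *m d -> G c -> H d ->
  dcoset G beta H g -> dcoset G alpha H g.
Proof.
move=> -> Gc Hd [a [b [Ga [Hb ->]]]]; exists (a *m c), (d *m b).
by rewrite !mulmxA; split; [apply: G_mul | split; [apply: H_mul|]].
Qed.

Lemma dcoset_eq_cosets_union (S : 'M[R]_2 -> Prop) alpha :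
  (forall b, H b -> cosets_union G S (alpha *m b)) ->
  (forall s, S s -> dcoset G alpha H s) ->
  forall g, dcoset G alpha H g <-> cosets_union G S g.
Proof.
move=> HS SH g; split=> [[a [b [Ga [Hb ->]]]] | [a [s [Ga [Ss ->]]]]].
  by rewrite -mulmxA; apply: cosets_unionMl => //; apply: HS.
have [c [d [Gc [Hd ->]]]] := SH s Ss; exists (a *m c), d.
by rewrite !mulmxA; split; [apply: G_mul|].
Qed.

End Cosets.

Section Gamma0_2plus.
Variable R : realType.
Local Notation intmx := (@intmx R).
Local Notation Gamma0_2 := (@Gamma0_2 R).
Local Notation Gamma0_2plus := (@Gamma0_2plus R).
Local Notation w2 := (@w2 R).
Local Notation r2 := (Num.sqrt (2 : R))^-1.
Local Notation W := (intmx 0 (-1) 2 0).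

Lemma intmxM a b c d a' b' c' d' : intmx a b c d *m intmx a' b' c' d' =
  intmx (a * a' + b * c') (a * b' + b * d') (c * a' + d * c') (c * b' + d * d').
Proof.
apply/matrixP=> i j; rewrite !mxE big_ord_recr big_ord1 /= !mxE.
by case: i => [[|[|//]] ?]; case: j => [[|[|//]] ?] /=; rewrite !intrD !intrM.
Qed.

Lemma intmx1 : intmx 1 0 0 1 = 1%:M.
Proof.
by apply/matrixP=> i j; rewrite !mxE; case: i => [[|[|//]] ?]; case: j => [[|[|//]] ?].
Qed.

Lemma halve_intmx a b c d :
  (2 : R)^-1 *: intmx (2 * a) (2 * b) (2 * c) (2 * d) = intmx a b c d.
Proof.
apply/matrixP=> i j; rewrite !mxE.
by case: i => [[|[|//]] ?]; case: j => [[|[|//]] ?] /=; rewrite intrM mulKf ?pnatr_eq0.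
Qed.

Lemma mulmx_w2 (A : 'M[R]_2) : A *m w2 = r2 *: (A *m W).
Proof. by rewrite -scalemxAr. Qed.

Lemma w2_mulmx (A : 'M[R]_2) : w2 *m A = r2 *: (W *m A).
Proof. by rewrite -scalemxAl. Qed.

Lemma mulmx_w2_scaled (A B : 'M[R]_2) :
  A *m w2 *m (r2 *: B) = (2 : R)^-1 *: (A *m W *m B).
Proof.
by rewrite mulmx_w2 -scalemxAl -scalemxAr scalerA -invfM -expr2 sqr_sqrtr ?ler0n.
Qed.

Lemma Gamma0_2_intmx a b c d : a * d - b * c = 1 -> (2 %| c)%Z ->
  Gamma0_2 (intmx a b c d).
Proof. by move=> det1 c_even; exists a, b, c, d. Qed.

Lemma Gamma0_2_mul g h : Gamma0_2 g -> Gamma0_2 h -> Gamma0_2 (g *m h).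
Proof.
move=> [a [b [c [d [-> [det1 c_even]]]]]] [a' [b' [c' [d' [-> [det1' c'_even]]]]]].
rewrite intmxM; apply: Gamma0_2_intmx.
  transitivity ((a * d - b * c) * (a' * d' - b' * c')); first ring.
  by rewrite det1 det1' mulr1.
by apply: rpredD; [apply: dvdz_mulr | apply: dvdz_mull].
Qed.

Lemma intmxN1 : intmx (-1) 0 0 (-1) = - 1%:M.
Proof.
apply/matrixP=> i j; rewrite !mxE.
by case: i => [[|[|//]] ?]; case: j => [[|[|//]] ?]; rewrite /= ?oppr0.
Qed.

Lemma w2_sqr : w2 *m w2 = - 1%:M.
Proof.
rewrite -[LHS]/(w2 *m (r2 *: W)) -[w2 in LHS]mul1mx mulmx_w2_scaled mul1mx.
by rewrite intmxM -intmxN1 -[RHS]halve_intmx; congr (_ *: intmx _ _ _ _); ring.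
Qed.

Lemma diag_w2 a d : intmx a 0 0 d *m w2 = w2 *m intmx d 0 0 a.
Proof. by rewrite mulmx_w2 w2_mulmx !intmxM; congr (_ *: intmx _ _ _ _); ring. Qed.

Lemma Gamma0_2_conj_w2 u : Gamma0_2 u ->
  exists2 u', Gamma0_2 u' & w2 *m u = u' *m w2 /\ u *m w2 = w2 *m u'.
Proof.
move=> [a [b [c [d [-> [det1 /dvdzP[c' ec]]]]]]].
exists (intmx d (-c') (-(2 * b)) a).
  apply: Gamma0_2_intmx; last by rewrite rpredN dvdz_mulr.
  by rewrite -[RHS]det1 ec; ring.
by split; rewrite mulmx_w2 w2_mulmx !intmxM ec; congr (_ *: intmx _ _ _ _); ring.
Qed.

Lemma Gamma0_2N1 : Gamma0_2 (- 1%:M).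
Proof. by rewrite -intmxN1; apply: Gamma0_2_intmx. Qed.

Lemma Gamma0_2_plus g : Gamma0_2 g -> Gamma0_2plus g.
Proof. by left. Qed.

Lemma Gamma0_2plus_w2 : Gamma0_2plus w2.
Proof.
by right; exists 1%:M; rewrite mul1mx -intmx1; split=> //; apply: Gamma0_2_intmx.
Qed.

Lemma Gamma0_2plus_Nw2 : Gamma0_2plus (- w2).
Proof. by right; exists (- 1%:M); rewrite mulNmx mul1mx; split=> //; exact: Gamma0_2N1. Qed.

Lemma Gamma0_2plus_mul g h :
  Gamma0_2plus g -> Gamma0_2plus h -> Gamma0_2plus (g *m h).
Proof.
case=> [Gg | [u [Gu ->]]] [Gh | [v [Gv ->]]].
- by left; apply: Gamma0_2_mul.
- by right; exists (g *m v); rewrite mulmxA; split=> //; apply: Gamma0_2_mul.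
- have [h' Gh' [w2h _]] := Gamma0_2_conj_w2 Gh.
  right; exists (u *m h'); rewrite -mulmxA w2h !mulmxA.
  by split=> //; apply: Gamma0_2_mul.
- have [v' Gv' [w2v _]] := Gamma0_2_conj_w2 Gv.
  left; rewrite mulmxA -(mulmxA u) w2v !mulmxA -(mulmxA _ w2) w2_sqr.
  by apply: Gamma0_2_mul; [apply: Gamma0_2_mul | apply: Gamma0_2N1].
Qed.

End Gamma0_2plus.

Section DoubleCosets.
Variables (R : realType) (m : nat).
Hypothesis m_gt0 : (0 < m)%N.
Local Notation intmx := (@intmx R).
Local Notation Gamma0_2 := (@Gamma0_2 R).
Local Notation Gamma0_2plus := (@Gamma0_2plus R).
Local Notation w2 := (@w2 R).
Local Notation r2 := (Num.sqrt (2 : R))^-1.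
Local Notation alpha := (intmx 1 0 0 m%:Z).
Local Notation beta := (intmx m%:Z 0 0 1).
Local Notation M1 := (@M1 R m).
Local Notation M2 := (@M2 R m).
Local Notation S1 := (@S1 R m).
Local Notation S2 := (@S2 R m).
Local Notation Mm := (@Mm R m).

Lemma alpha_mul_cosets_M1 b : Gamma0_2 b -> cosets_union Gamma0_2 (M1) (alpha *m b).
Proof.
move=> [b11 [b12 [b21 [b22 [-> [det_b b21_even]]]]]].
have [b11_odd _] := odd_diag_det1 det_b b21_even.
have b11_neq0 : b11 != 0 by apply: contraNneq b11_odd => ->.
have : (b11 != 0) || (m%:Z * b21 != 0) by rewrite b11_neq0.
case/gcdz_coprime_cofactors=> [a [c [g [g_gt0 eA eC co_ac]]]].
have det_N : b11 * (m%:Z * b22) - b12 * (m%:Z * b21) = m%:Z.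
  by rewrite -[RHS]mulr1 -det_b; ring.
have det_gt0 : 0 < b11 * (m%:Z * b22) - b12 * (m%:Z * b21) by rewrite det_N ltz_nat.
have [q [s [y [z [det_qs eB eD [z_gt0 y_ge0 y_lt] gz]]]]] :=
  upper_triangular_factor eA eC co_ac g_gt0 det_gt0.
have c_even : (2 %| c)%Z.
  have : (2 %| c * g)%Z by rewrite -eC dvdz_mull.
  by rewrite dvd2zM => /orP[// | g_even]; case/negP: b11_odd; rewrite eA dvdz_mull.
exists (intmx a q c s), (intmx g y 0 z); split; first exact: Gamma0_2_intmx.
split.
  exists g, y, z; do !split=> //; first by rewrite gz det_N.
    apply: gcdz3_eq1 => d dg dy dz; rewrite -det_b.
    apply: rpredB; apply: dvdz_mulr; first by rewrite eA dvdz_mull.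
    by rewrite eB; apply: rpredD; apply: dvdz_mull.
  by rewrite odd_absz; apply: contra b11_odd; rewrite eA; apply: dvdz_mull.
rewrite !intmxM; congr intmx; [rewrite eA | rewrite eB | rewrite eC | rewrite eD]; ring.
Qed.

(* Here and in [S1_dcoset], [S2_dcoset] the right factor b is a matrix of
   Gamma_0(2) built from the Bezout relation, and the left factor is
   s b^-1 alpha^-1 (resp. s b^-1 beta^-1). *)
Lemma M1_dcoset s : M1 s -> dcoset Gamma0_2 alpha Gamma0_2 s.
Proof.
move=> [x [y [z [-> [x_gt0 [_ [xz_m [_ [_ [/eqP xyz1 x_odd]]]]]]]]]].
rewrite odd_absz in x_odd.
have [k co_x] := exists_coprimez_addMr (lt0r_neq0 x_gt0) xyz1.
have : coprimez x (2 * (y + k * z)).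
  by rewrite coprimezMr co_x coprimez_sym coprime2z x_odd.
case/coprimezP=> [[u v] /= uv1].
exists (intmx (1 - 2 * k * v * z) (- k) (2 * v * z) 1).
exists (intmx x (y + k * z) (- (2 * v)) u).
split; first by apply: Gamma0_2_intmx; [ring | rewrite -mulrA dvdz_mulr].
split; first by apply: Gamma0_2_intmx; [rewrite -[RHS]uv1; ring | rewrite rpredN dvdz_mulr].
rewrite -xz_m !intmxM; congr intmx.
- ring.
- by apply: (eq_mod1 (F := k * z) uv1); ring.
- ring.
- by apply: (eq_mod1 (F := - z) uv1); ring.
Qed.

Section BetaMulCosets.
Variables b11 b12 b21 b22 a c g : int.
Hypotheses (det_b : b11 * b22 - b12 * b21 = 1) (b21_even : (2 %| b21)%Z).
Hypotheses (eA : m%:Z * b11 = a * g) (eC : b21 = c * g).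
Hypotheses (g_gt0 : 0 < g) (co_ac : coprimez a c).

Lemma beta_mul_cosets_S1 : (2 %| c)%Z ->
  cosets_union Gamma0_2plus (M2) (intmx (m%:Z * b11) (m%:Z * b12) b21 b22).
Proof.
move=> c_even; have [_ b22_odd] := odd_diag_det1 det_b b21_even.
have det_N : m%:Z * b11 * b22 - m%:Z * b12 * b21 = m%:Z.
  by rewrite -[RHS]mulr1 -det_b; ring.
have det_gt0 : 0 < m%:Z * b11 * b22 - m%:Z * b12 * b21 by rewrite det_N ltz_nat.
have [q [s [y [z [det_qs eB eD [z_gt0 y_ge0 y_lt] gz]]]]] :=
  upper_triangular_factor eA eC co_ac g_gt0 det_gt0.
exists (intmx a q c s), (intmx g y 0 z); split; first by left; apply: Gamma0_2_intmx.
split.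
  left; exists g, y, z; do !split=> //; first by rewrite gz det_N.
    apply: gcdz3_eq1 => d dg dy dz; rewrite -det_b.
    apply: rpredB; apply: dvdz_mull; last by rewrite eC dvdz_mull.
    by rewrite eD; apply: rpredD; apply: dvdz_mull.
  rewrite odd_absz; apply: contra b22_odd => z_even.
  by rewrite eD; apply: rpredD; [apply: dvdz_mulr | apply: dvdz_mull].
rewrite !intmxM; congr intmx; [rewrite eA | rewrite eB | rewrite eC | rewrite eD]; ring.
Qed.

(* With W = [[0, -1], [2, 0]], reducing W^-1 (2 N), whose first column is
   g (c, -2 a), gives 2 N = E W T, that is N = E w2 (T / sqrt 2). *)
Lemma beta_mul_cosets_S2 : ~~ (2 %| c)%Z ->
  cosets_union Gamma0_2plus (M2) (intmx (m%:Z * b11) (m%:Z * b12) b21 b22).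
Proof.
move=> c_odd.
have eA' : - (2 * (m%:Z * b11)) = - (2 * a) * g by rewrite eA; ring.
have co_c2a : coprimez c (- (2 * a)).
  by rewrite coprimezN coprimezMr coprimez_sym coprime2z c_odd coprimez_sym.
have det_N : b21 * - (2 * (m%:Z * b12)) - b22 * - (2 * (m%:Z * b11)) = (2 * m)%:Z.
  by rewrite PoszM -[RHS]mulr1 -[X in _ = _ * X]det_b; ring.
have det_gt0 : 0 < b21 * - (2 * (m%:Z * b12)) - b22 * - (2 * (m%:Z * b11)).
  by rewrite det_N ltz_nat muln_gt0 m_gt0.
have [q [s [y [z [det_sq eB eD [z_gt0 y_ge0 y_lt] gz]]]]] :=
  upper_triangular_factor eC eA' co_c2a g_gt0 det_gt0.
exists (intmx s a (- (2 * q)) c *m w2), (r2 *: intmx g y 0 z); split.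
  by right; exists (intmx s a (- (2 * q)) c); split=> //; apply: Gamma0_2_intmx;
    [rewrite -[RHS]det_sq; ring | rewrite rpredN dvdz_mulr].
split.
  right; exists g, y, z; do !split=> //; first by rewrite gz det_N.
  - apply: gcdz3_eq1 => d dg dy dz; rewrite -det_b.
    apply: rpredB; apply: dvdz_mull; last by rewrite eC dvdz_mull.
    by rewrite eB; apply: rpredD; apply: dvdz_mull.
  - rewrite odd_absz negbK; move: b21_even; rewrite eC dvd2zM.
    by case/orP=> // c_even; case/negP: c_odd.
  - have s_odd : ~~ (2 %| s)%Z.
      have two_q2a : (2 %| q * - (2 * a))%Z by rewrite dvdz_mull // rpredN dvdz_mulr.
      have : ~~ (2 %| c * s - q * - (2 * a))%Z by rewrite det_sq.
      by rewrite (rpredBr _ two_q2a) dvd2zM negb_or => /andP[].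
    have : (2 %| s * z)%Z.
      have -> : s * z = - (2 * (m%:Z * b12)) + 2 * a * y by rewrite eD; ring.
      by apply: rpredD; [rewrite rpredN | rewrite -mulrA]; apply: dvdz_mulr.
    by rewrite odd_absz negbK dvd2zM (negbTE s_odd).
rewrite mulmx_w2_scaled !intmxM -[LHS]halve_intmx; congr (_ *: intmx _ _ _ _).
- by rewrite eA; ring.
- by apply: oppr_inj; rewrite eD; ring.
- by rewrite eC; ring.
- by rewrite eB; ring.
Qed.

End BetaMulCosets.

Lemma beta_mul_cosets_M2 b : Gamma0_2 b -> cosets_union Gamma0_2plus (M2) (beta *m b).
Proof.
move=> [b11 [b12 [b21 [b22 [-> [det_b b21_even]]]]]].
have [b11_odd _] := odd_diag_det1 det_b b21_even.
have m_neq0 : m%:Z != 0 by apply: lt0r_neq0; rewrite ltz_nat.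
have b11_neq0 : b11 != 0 by apply: contraNneq b11_odd => ->.
have : (m%:Z * b11 != 0) || (b21 != 0) by rewrite mulf_neq0.
case/gcdz_coprime_cofactors=> [a [c [g [g_gt0 eA eC co_ac]]]].
have -> : beta *m intmx b11 b12 b21 b22 = intmx (m%:Z * b11) (m%:Z * b12) b21 b22.
  by rewrite intmxM; congr intmx; ring.
have [c_even | c_odd] := boolP (2 %| c)%Z.
- exact: (beta_mul_cosets_S1 det_b b21_even eA eC g_gt0 co_ac c_even).
- exact: (beta_mul_cosets_S2 det_b b21_even eA eC g_gt0 co_ac c_odd).
Qed.

Lemma S1_dcoset s : S1 s -> dcoset Gamma0_2 beta Gamma0_2 s.
Proof.
move=> [x [y [z [-> [x_gt0 [_ [xz_m [_ [_ [/eqP xyz1 z_odd]]]]]]]]]].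
rewrite odd_absz in z_odd.
have co_2xy_z : coprimez (gcdz (2 * x) (2 * y)) z.
  by rewrite -mulz_gcdr coprimezMl coprime2z z_odd.
have x2_neq0 : 2 * x != 0 by rewrite mulf_neq0 ?lt0r_neq0.
have [k /coprimezP[[u v] /= uv1]] := exists_coprimez_addMr x2_neq0 co_2xy_z.
exists (intmx k (y * v + x * u) (-2) (z * v)).
exists (intmx v (- u) (2 * x) (2 * y + k * z)).
split; first by apply: Gamma0_2_intmx; [rewrite -[RHS]uv1; ring | rewrite rpredN dvdzz].
split; first by apply: Gamma0_2_intmx; [rewrite -[RHS]uv1; ring | apply: dvdz_mulr].
rewrite -xz_m !intmxM; congr intmx.
- by apply: (eq_mod1 (F := - x) uv1); ring.
- by apply: (eq_mod1 (F := - y) uv1); ring.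
- ring.
- by apply: (eq_mod1 (F := - z) uv1); ring.
Qed.

Lemma S2_dcoset s : S2 s -> dcoset Gamma0_2plus beta Gamma0_2 s.
Proof.
move=> [x [y [z [-> [x_gt0 [_ [xz_2m [_ [_ [/eqP xyz1 [x_even z_even]]]]]]]]]]].
rewrite odd_absz negbK in x_even; rewrite odd_absz negbK in z_even.
have [k /coprimezP[[u v] /= uv1]] := exists_coprimez_addMr (lt0r_neq0 x_gt0) xyz1.
exists (intmx (- (x * u) - y * v) k (- (z * v)) (-1) *m w2).
exists (intmx v (- u) x (y + k * z)).
split.
  right; exists (intmx (- (x * u) - y * v) k (- (z * v)) (-1)); split=> //.
  by apply: Gamma0_2_intmx; [rewrite -[RHS]uv1; ring | rewrite rpredN dvdz_mulr].
split; first by apply: Gamma0_2_intmx; [rewrite -[RHS]uv1; ring |].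
case/dvdzP: x_even xz_2m uv1 => x' -> xz_2m uv1.
have em : m%:Z = x' * z.
  by rewrite PoszM in xz_2m; apply: (@mulfI _ 2%:Z) => //; rewrite -xz_2m; ring.
rewrite mulmx_w2 -!scalemxAl; congr (_ *: _); rewrite em !intmxM; congr intmx.
- by apply: (eq_mod1 (F := - (x' * 2)) uv1); ring.
- by apply: (eq_mod1 (F := - y) uv1); ring.
- ring.
- by apply: (eq_mod1 (F := - z) uv1); ring.
Qed.

Lemma M2_dcoset s : M2 s -> dcoset Gamma0_2plus beta Gamma0_2 s.
Proof.
case=> [/S1_dcoset | /S2_dcoset //].
by apply: dcosetS => //; apply: Gamma0_2_plus.
Qed.

Lemma beta_conj_alpha : beta = - w2 *m alpha *m w2.
Proof. by rewrite -mulmxA diag_w2 mulmxA mulNmx w2_sqr opprK mul1mx. Qed.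

Lemma alpha_conj_beta : alpha = w2 *m beta *m - w2.
Proof. by rewrite -diag_w2 -mulmxA mulmxN w2_sqr opprK mulmx1. Qed.

Lemma dcoset_alpha_Gamma0_2 g :
  dcoset Gamma0_2plus alpha Gamma0_2 g <-> cosets_union Gamma0_2plus (M1) g.
Proof.
apply: dcoset_eq_cosets_union => [|b Gb | s M1s]; first exact: Gamma0_2plus_mul.
  by apply: cosets_unionS (alpha_mul_cosets_M1 Gb) => //; apply: Gamma0_2_plus.
by apply: dcosetS (M1_dcoset M1s) => //; apply: Gamma0_2_plus.
Qed.

Lemma dcoset_beta_Gamma0_2 g :
  dcoset Gamma0_2plus beta Gamma0_2 g <-> cosets_union Gamma0_2plus (M2) g.
Proof.
apply: dcoset_eq_cosets_union;
  [exact: Gamma0_2plus_mul | exact: beta_mul_cosets_M2 | exact: M2_dcoset].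
Qed.

Lemma dcoset_beta_alpha g :
  dcoset Gamma0_2plus beta Gamma0_2plus g <-> dcoset Gamma0_2plus alpha Gamma0_2plus g.
Proof.
have Gmul := @Gamma0_2plus_mul R.
split; [apply: (dcoset_factor Gmul Gmul beta_conj_alpha)
       | apply: (dcoset_factor Gmul Gmul alpha_conj_beta)];
  by [exact: Gamma0_2plus_w2 | exact: Gamma0_2plus_Nw2].
Qed.

Lemma dcoset_alpha_Gamma0_2plus g :
  dcoset Gamma0_2plus alpha Gamma0_2plus g <-> cosets_union Gamma0_2plus (Mm) g.
Proof.
apply: dcoset_eq_cosets_union => [|b [Gb | [u [Gu ->]]] | s [M1s | M2s]].
- exact: Gamma0_2plus_mul.
- apply: cosets_unionS (alpha_mul_cosets_M1 Gb); first exact: Gamma0_2_plus.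
  by move=> s; left.
- have [u' Gu' [_ ->]] := Gamma0_2_conj_w2 Gu.
  rewrite mulmxA diag_w2 -mulmxA.
  apply: cosets_unionMl; [exact: Gamma0_2plus_mul | exact: Gamma0_2plus_w2 |].
  by apply: cosets_unionS (beta_mul_cosets_M2 Gu') => // s; right.
- by apply: dcosetS (M1_dcoset M1s); apply: Gamma0_2_plus.
- apply/dcoset_beta_alpha; apply: dcosetS (M2_dcoset M2s) => //.
  exact: Gamma0_2_plus.
Qed.

End DoubleCosets.

Theorem proposition2p1 (R : realType) (m : nat) (m_gt0 : (0 < m)%N)
    (m_even : ~~ odd m) :
  (forall g : 'M[R]_2,
      dcoset (@Gamma0_2plus R) (@intmx R 1 0 0 m%:Z) (@Gamma0_2 R) g <->
      cosets_union (@Gamma0_2plus R) (@M1 R m) g) /\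
  (forall g : 'M[R]_2,
      dcoset (@Gamma0_2plus R) (@intmx R m%:Z 0 0 1) (@Gamma0_2 R) g <->
      cosets_union (@Gamma0_2plus R) (@M2 R m) g) /\
  (forall g : 'M[R]_2,
      (dcoset (@Gamma0_2plus R) (@intmx R m%:Z 0 0 1) (@Gamma0_2plus R) g <->
       dcoset (@Gamma0_2plus R) (@intmx R 1 0 0 m%:Z) (@Gamma0_2plus R) g) /\
      (dcoset (@Gamma0_2plus R) (@intmx R 1 0 0 m%:Z) (@Gamma0_2plus R) g <->
       cosets_union (@Gamma0_2plus R) (@Mm R m) g)).
Proof.
split; first exact: dcoset_alpha_Gamma0_2.
split; first exact: dcoset_beta_Gamma0_2.
by move=> g; split; [exact: dcoset_beta_alpha | exact: dcoset_alpha_Gamma0_2plus].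
Qed.
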